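(* Let $L\subset M$ be Noetherian $R_2$-modules such that $M/L\cong R_2/\mathfrak{p}$ for a prime ideal $\mathfrak{p}\subset R_2$, let $\Lambda\in\mathcal{L}_2$, and assume $M/\mathfrak{b}_\Lambda M$ is finite. Then there is an ideal $\mathfrak{a}\subset R_2$ with $\mathfrak{b}_\Lambda\mathfrak{p}\subset\mathfrak{a}\subset\mathfrak{b}_\Lambda\cap\mathfrak{p}$ such that \[|M/\mathfrak{b}_\Lambda M|=\left|\frac{R_2/\mathfrak{p}}{\mathfrak{b}_\Lambda(R_2/\mathfrak{p})}\right|\cdot\frac{|L/\mathfrak{b}_\Lambda L|}{|(\mathfrak{b}_\Lambda\cap\mathfrak{p})/\mathfrak{a}|}.\]
   Context: $R_2=\mathbb{Z}[u_1^{\pm1},u_2^{\pm1}]$; $\mathcal{L}_2$ is the set of finite-index subgroups of $\mathbb{Z}^2$; for $\Lambda\in\mathcal{L}_2$, $\mathfrak{b}_\Lambda$ is the ideal of $R_2$ generated by $\{u^{\mathbf{n}}-1:\mathbf{n}\in\Lambda\}$ with $u^{\mathbf{n}}=u_1^{n_1}u_2^{n_2}$. *)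

From HB Require Import structures.
From mathcomp Require Import all_boot all_order all_algebra.
From Stdlib Require List.
Set Implicit Arguments. Unset Strict Implicit. Unset Printing Implicit Defensive.
Import Order.TTheory GRing.Theory Num.Theory.
Local Open Scope ring_scope.

Definition lmono (R : comUnitRingType) (u1 u2 : R) (n : int * int) : R :=
  u1 ^ n.1 * u2 ^ n.2.

(* R, together with u1 u2, is the Laurent polynomial ring Z[u1^{+-1},u2^{+-1}]:
   u1, u2 are units and the integer monomials u^n (n in Z^2) form a Z-basis of R
   (every element is a finite Z-combination of monomials, uniquely). *)
Definition is_laurent2 (R : comUnitRingType) (u1 u2 : R) : Prop :=
  [/\ u1 \is a GRing.unit, u2 \is a GRing.unit,
      (forall r : R, exists s : seq ((int * int) * int),
          r = \sum_(t <- s) (t.2)%:~R * lmono u1 u2 t.1)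
    & (forall s : seq ((int * int) * int), uniq (map fst s) ->
          \sum_(t <- s) (t.2)%:~R * lmono u1 u2 t.1 = 0 ->
          forall t, t \in s -> t.2 = 0)].

Definition is_fi_subgroup (Lam : int * int -> Prop) : Prop :=
  [/\ Lam (0, 0),
      (forall a b, Lam a -> Lam b -> Lam (a.1 - b.1, a.2 - b.2))
    & exists reps : seq (int * int), forall n, exists2 r, r \in reps &
          Lam (n.1 - r.1, n.2 - r.2)].

Definition is_ideal (R : comUnitRingType) (I : R -> Prop) : Prop :=
  [/\ I 0, (forall x y, I x -> I y -> I (x + y)) & (forall r x, I x -> I (r * x))].

Definition is_prime_ideal (R : comUnitRingType) (P : R -> Prop) : Prop :=
  [/\ is_ideal P, ~ P 1 & forall x y, P (x * y) -> P x \/ P y].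

Definition bideal (R : comUnitRingType) (u1 u2 : R) (Lam : int * int -> Prop)
  (x : R) : Prop :=
  exists s : seq (R * (int * int)), (forall t, List.In t s -> Lam t.2) /\
    x = \sum_(t <- s) t.1 * (lmono u1 u2 t.2 - 1).

Definition idprod (R : comUnitRingType) (I J : R -> Prop) (x : R) : Prop :=
  exists s : seq (R * R), (forall t, List.In t s -> I t.1 /\ J t.2) /\
    x = \sum_(t <- s) t.1 * t.2.

Definition idsum (R : comUnitRingType) (I J : R -> Prop) (x : R) : Prop :=
  exists a b, [/\ I a, J b & x = a + b].

Definition is_submod (R : comUnitRingType) (M : lmodType R) (N : M -> Prop) : Prop :=
  [/\ N 0, (forall x y, N x -> N y -> N (x + y)) & (forall (r : R) x, N x -> N (r *: x))].

Definition idmod (R : comUnitRingType) (M : lmodType R) (I : R -> Prop) (N : M -> Prop)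
  (x : M) : Prop :=
  exists s : seq (R * M), (forall t, List.In t s -> I t.1 /\ N t.2) /\
    x = \sum_(t <- s) t.1 *: t.2.

Definition fg_submod (R : comUnitRingType) (M : lmodType R) (N : M -> Prop) : Prop :=
  exists gens : seq M, (forall g, List.In g gens -> N g) /\
    forall x, N x -> exists c : seq R,
      x = \sum_(i < size gens) c`_i *: gens`_i.

Definition noetherian_sub (R : comUnitRingType) (M : lmodType R) (N : M -> Prop) : Prop :=
  forall K : M -> Prop, is_submod K -> (forall x, K x -> N x) -> fg_submod K.

(* qcard A B n : the quotient A/B (B subset A additive subgroups of X) is finite
   with exactly n elements: a complete irredundant system of n representatives. *)
Definition qcard (X : zmodType) (A B : X -> Prop) (n : nat) : Prop :=
  exists s : seq X, [/\ size s = n, (forall x, List.In x s -> A x),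
    (forall i j, (i < n)%N -> (j < n)%N -> B (s`_i - s`_j) -> i = j)
    & forall a, A a -> exists2 i, (i < n)%N & B (a - s`_i)].

(* M / L is isomorphic (as R-module) to R / P: f induces an R-linear bijection
   M/L -> R/P (additive and R-linear modulo P, surjective modulo P, kernel L). *)
Definition quot_iso_Rmod (R : comUnitRingType) (M : lmodType R) (L : M -> Prop)
  (P : R -> Prop) : Prop :=
  exists f : M -> R,
    [/\ (forall x y, P (f (x + y) - (f x + f y))),
        (forall (r : R) x, P (f (r *: x) - r * f x)),
        (forall r : R, exists x, P (f x - r))
      & (forall x, P (f x) <-> L x)].

(* Fix m0 in M lifting 1 under M/L ≅ R/P, and write b for the ideal b_Λ.
   Counting M/bM along bM ⊆ L + bM ⊆ M gives |M/bM| = |R/(b+P)| · |L/(L ∩ bM)|,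
   since M/(L + bM) ≅ R/(b+P) and (L + bM)/bM ≅ L/(L ∩ bM).  Counting L/bL along
   bL ⊆ L ∩ bM ⊆ L gives |L/bL| = |L/(L ∩ bM)| · |(L ∩ bM)/bL|, and r ↦ r m0
   identifies (b ∩ P)/𝔞 with (L ∩ bM)/bL for 𝔞 = {r ∈ b ∩ P | r m0 ∈ bL}.
   The last quotient is finite because L ∩ bM is finitely generated (L is
   Noetherian) and is killed modulo bL by b + P, whose quotient R/(b+P) is finite. *)

From HB Require Import structures.
From mathcomp Require Import all_boot all_order all_algebra ring.
From Stdlib Require Import Classical.
From Stdlib Require List.
Set Implicit Arguments. Unset Strict Implicit. Unset Printing Implicit Defensive.
Import Order.TTheory GRing.Theory Num.Theory.
Local Open Scope ring_scope.

Lemma In_mem (T : eqType) (x : T) (s : seq T) : List.In x s <-> x \in s.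
Proof.
elim: s => [|y s IH] /=; first by rewrite in_nil.
rewrite in_cons; split.
- by case=> [->|/IH ->]; rewrite ?eqxx ?orbT.
- by case/orP=> [/eqP ->|/IH]; [left | right].
Qed.

Lemma finite_choice (T U : eqType) (Q : T -> U -> Prop) (s : seq T) :
  exists t : seq U, (forall y, y \in t -> exists2 x, x \in s & Q x y) /\
    forall x, x \in s -> (exists y, Q x y) -> exists2 y, y \in t & Q x y.
Proof.
elim: s => [|x s [t [tQ tC]]]; first by exists [::].
have [[y hy]|nQ] := classic (exists y, Q x y).
- exists (y :: t); split=> [z|z].
  + rewrite in_cons => /orP [/eqP->|/tQ [x' hx' hQ]]; first by exists x; rewrite ?mem_head.
    by exists x' => //; rewrite in_cons hx' orbT.
  + rewrite in_cons => /orP [/eqP-> _|/tC hC /hC [y' hy' hQ]]; first by exists y; rewrite ?mem_head.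
    by exists y' => //; rewrite in_cons hy' orbT.
- exists t; split=> [z /tQ [x' hx' hQ]|z].
  + by exists x' => //; rewrite in_cons hx' orbT.
  + by rewrite in_cons => /orP [/eqP-> //|/tC].
Qed.

Section AdditiveQuotients.
Variable X : zmodType.
Implicit Types (A B C : X -> Prop) (x y z : X).

Definition is_subgroup B := B 0 /\ forall x y, B x -> B y -> B (x - y).

Definition sumset A B x := exists a b, [/\ A a, B b & x = a + b].

Definition irredundant B (t : seq X) :=
  forall i j, (i < size t)%N -> (j < size t)%N -> B (t`_i - t`_j) -> i = j.

Variable B : X -> Prop.
Hypothesis B_sub : is_subgroup B.

Lemma subgroupN x : B x -> B (- x).
Proof. by rewrite -sub0r; apply: B_sub.2; case: B_sub. Qed.

Lemma subgroupD x y : B x -> B y -> B (x + y).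
Proof. by move=> hx hy; rewrite -[y]opprK; apply: B_sub.2 => //; exact: subgroupN. Qed.

Lemma subgroup_sym x y : B (x - y) -> B (y - x).
Proof. by move=> h; rewrite -opprB; exact: subgroupN. Qed.

Lemma subgroup_trans y x z : B (x - y) -> B (y - z) -> B (x - z).
Proof. by move=> h1 h2; have := subgroupD h1 h2; rewrite addrA subrK. Qed.

Lemma irredundant_cover A (s : seq X) : (forall x, x \in s -> A x) ->
  exists t : seq X, [/\ forall x, x \in t -> A x, irredundant B t
    & forall x, x \in s -> exists2 y, y \in t & B (x - y)].
Proof.
elim: s => [|x s IH] sA; first by exists [::]; split=> // [x|i j]; rewrite ?in_nil.
have [t [tA tI tC]] := IH (fun y hy => sA y (mem_behead (s := x :: s) hy)).
have [hx|hx] := classic (exists2 y, y \in t & B (x - y)).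
  by exists t; split=> // z; rewrite in_cons => /orP [/eqP-> //|]; exact: tC.
exists (x :: t); split.
- by move=> z; rewrite in_cons => /orP [/eqP->|/tA //]; apply: sA; rewrite mem_head.
- move=> [|i] [|j] //= hi hj hB.
  + by case: hx; exists t`_j; rewrite ?mem_nth.
  + by case: hx; exists t`_i; [rewrite mem_nth | exact: subgroup_sym].
  + by congr S; apply: tI.
- move=> z; rewrite in_cons => /orP [/eqP->|/tC [y hy hB]].
  + by exists x; rewrite ?mem_head // subrr; case: B_sub.
  + by exists y => //; rewrite in_cons hy orbT.
Qed.

Lemma qcard_of_cover A (s : seq X) : (forall x, x \in s -> A x) ->
  (forall a, A a -> exists2 x, x \in s & B (a - x)) -> exists n, qcard A B n.
Proof.
move=> sA sC; have [t [tA tI tC]] := irredundant_cover sA.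
exists (size t), t; split=> // [x /In_mem /tA //|a /sC [x /tC [y yt hy] hx]].
exists (index y t); first by rewrite index_mem.
by rewrite nth_index //; exact: subgroup_trans hx hy.
Qed.

Lemma irredundant_size_le A (s t : seq X) : irredundant B s -> (forall x, x \in s -> A x) ->
  (forall a, A a -> exists2 j, (j < size t)%N & B (a - t`_j)) -> (size s <= size t)%N.
Proof.
move=> sI sA tC.
have near_t (i : 'I_(size s)) : exists j : 'I_(size t), B (s`_i - t`_j).
  by have [j hj hB] := tC _ (sA _ (mem_nth 0 (ltn_ord i))); exists (Ordinal hj).
have [h hP] := fin_all_exists near_t.
have h_inj : injective h.
  move=> i j eij; apply: val_inj; apply: sI; rewrite ?ltn_ord //.
  by apply: (subgroup_trans (hP i)); rewrite eij; exact: subgroup_sym (hP j).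
by have := leq_card h h_inj; rewrite !card_ord.
Qed.

Lemma qcard_uniq A n m : qcard A B n -> qcard A B m -> n = m.
Proof.
move=> [s [<- sA sI sC]] [t [<- tA tI tC]].
have sA' x : x \in s -> A x by move/In_mem; exact: sA.
have tA' x : x \in t -> A x by move/In_mem; exact: tA.
by apply/eqP; rewrite eqn_leq (irredundant_size_le sI sA' tC) (irredundant_size_le tI tA' sC).
Qed.

End AdditiveQuotients.

Lemma qcard_coarsen (X : zmodType) (A B B' : X -> Prop) n :
  is_subgroup B' -> (forall x, B x -> B' x) ->
  qcard A B n -> exists m, qcard A B' m.
Proof.
move=> B'_sub BB' [s [ss sA _ sC]]; apply: (qcard_of_cover B'_sub (s := s)).
- by move=> x /In_mem /sA.
- by move=> a /sC [i hi /BB' hB]; exists s`_i; rewrite ?mem_nth ?ss.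
Qed.

Lemma subgroupI (X : zmodType) (A B : X -> Prop) :
  is_subgroup A -> is_subgroup B -> is_subgroup (fun x => A x /\ B x).
Proof.
move=> [A0 AB] [B0 BB]; split=> // x y [hAx hBx] [hAy hBy].
by split; [exact: AB | exact: BB].
Qed.

Lemma sumset_subgroup (X : zmodType) (A B : X -> Prop) :
  is_subgroup A -> is_subgroup B -> is_subgroup (sumset A B).
Proof.
move=> [A0 AB] [B0 BB]; split; first by exists 0, 0; rewrite addr0.
move=> _ _ [a [b [ha hb ->]]] [a' [b' [ha' hb' ->]]].
by exists (a - a'), (b - b'); rewrite opprD addrACA; split; [exact: AB | exact: BB |].
Qed.

Lemma qcard_restrict (X : zmodType) (A B C : X -> Prop) n :
  is_subgroup B -> is_subgroup C -> (forall x, C x -> A x) ->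
  qcard A B n -> exists m, qcard C (fun x => C x /\ B x) m.
Proof.
move=> B_sub C_sub CA [s [ss sA _ sC]].
have [t [tQ tC]] := finite_choice (fun x c => C c /\ B (c - x)) s.
apply: (qcard_of_cover (subgroupI C_sub B_sub) (s := t)) => [y /tQ [x _ []] //|c hc].
have [i hi hB] := sC c (CA c hc).
have s_i : s`_i \in s by rewrite mem_nth ?ss.
have [y yt [hy hBy]] := tC _ s_i (ex_intro _ c (conj hc hB)).
exists y => //; split; first exact: C_sub.2.
by apply: (subgroup_trans B_sub hB); exact: subgroup_sym.
Qed.

Lemma qcard_tower (X : zmodType) (A B C : X -> Prop) n1 n2 :
  is_subgroup A -> is_subgroup B -> (forall x, B x -> A x) -> (forall x, C x -> B x) ->
  qcard A B n1 -> qcard B C n2 -> qcard A C (n1 * n2).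
Proof.
move=> A_sub B_sub BA CB [s [ss sA sI sC]] [t [st tA tI tC]].
have sA' i : (i < n1)%N -> A s`_i by move=> hi; apply/sA/In_mem; rewrite mem_nth ?ss.
have tB' i : (i < n2)%N -> B t`_i by move=> hi; apply/tA/In_mem; rewrite mem_nth ?st.
pose u := [seq s`_(k %/ n2) + t`_(k %% n2) | k <- iota 0 (n1 * n2)].
have digits k : (k < n1 * n2)%N -> [/\ (0 < n2)%N, (k %/ n2 < n1)%N & (k %% n2 < n2)%N].
  move=> hk; have n2_gt0 : (0 < n2)%N by case: (n2) hk; rewrite ?muln0.
  by rewrite ltn_divLR // ltn_pmod.
have nth_u k : (k < n1 * n2)%N -> u`_k = s`_(k %/ n2) + t`_(k %% n2).
  by move=> hk; rewrite (nth_map 0%N) ?size_iota // nth_iota // add0n.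
exists u; split.
- by rewrite size_map size_iota.
- move=> x /In_mem /mapP [k]; rewrite mem_iota add0n => /andP [_ hk] ->.
  by have [_ /sA' hs /tB' /BA ht] := digits k hk; exact: subgroupD.
- move=> i j hi hj; rewrite !nth_u // opprD addrACA => hC.
  have [_ hi1 hi2] := digits i hi; have [_ hj1 hj2] := digits j hj.
  have ht : B (t`_(i %% n2) - t`_(j %% n2)) by apply: B_sub.2; exact: tB'.
  have hq : (i %/ n2 = j %/ n2)%N.
    by apply: sI => //; have := B_sub.2 _ _ (CB _ hC) ht; rewrite addrK.
  move: hC; rewrite hq subrr add0r => /tI hr.
  by rewrite (divn_eq i n2) (divn_eq j n2) hq hr.
- move=> a ha; have [q hq hB] := sC _ ha; have [r hr hC] := tC _ hB.
  have n2_gt0 : (0 < n2)%N by case: (n2) hr.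
  have e1 : ((q * n2 + r) %/ n2 = q)%N by rewrite divnMDl // divn_small // addn0.
  have e2 : ((q * n2 + r) %% n2 = r)%N by rewrite modnMDl modn_small.
  have hk : (q * n2 + r < n1 * n2)%N by rewrite -ltn_divLR // e1.
  by exists (q * n2 + r)%N => //; rewrite nth_u // e1 e2 opprD addrA.
Qed.

Definition induces_quot_bij (X Y : zmodType) (h : X -> Y)
    (A B : X -> Prop) (A' B' : Y -> Prop) :=
  [/\ forall a, A a -> A' (h a),
      forall x y, A x -> A y -> B (x - y) <-> B' (h x - h y)
    & forall a', A' a' -> exists2 a, A a & B' (a' - h a)].

Section QuotientBijection.
Variables (X Y : zmodType) (h : X -> Y) (A B : X -> Prop) (A' B' : Y -> Prop).
Hypotheses (B_sub : is_subgroup B) (B'_sub : is_subgroup B').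
Hypothesis h_bij : induces_quot_bij h A B A' B'.

Lemma qcard_quot_bij_image n : qcard A B n -> qcard A' B' n.
Proof.
case: h_bij => hA hB hsurj [s [ss sA sI sC]].
have sA' i : (i < n)%N -> A s`_i by move=> hi; apply/sA/In_mem; rewrite mem_nth ?ss.
exists (map h s); split.
- by rewrite size_map.
- by move=> x /In_mem /mapP [y /In_mem hy ->]; exact/hA/sA.
- move=> i j hi hj; rewrite !(nth_map 0) ?ss // => hB'; apply: sI => //.
  exact/(hB _ _ (sA' _ hi) (sA' _ hj)).
- move=> a' /hsurj [a ha hB']; have [i hi hBi] := sC _ ha; exists i => //.
  rewrite (nth_map 0) ?ss //; apply: (subgroup_trans B'_sub hB').
  exact/(hB _ _ ha (sA' _ hi)).
Qed.

Lemma qcard_quot_bij n : qcard A B n <-> qcard A' B' n.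
Proof.
split; first exact: qcard_quot_bij_image.
case: (h_bij) => hA hB hsurj qA'.
case: (qA') => [s' [ss' sA' _ sC']].
have [t [tQ tC]] := finite_choice (fun y a => A a /\ B' (y - h a)) s'.
have [m qA] : exists m, qcard A B m.
  apply: (qcard_of_cover B_sub (s := t)) => [y /tQ [x _ []] //|a ha].
  have [i hi hBi] := sC' _ (hA _ ha).
  have s_i : s'`_i \in s' by rewrite mem_nth ?ss'.
  have [a0 ha0 hB0] := hsurj _ (sA' _ ((In_mem _ _).2 s_i)).
  have [y yt [hy hBy]] := tC _ s_i (ex_intro _ a0 (conj ha0 hB0)).
  by exists y => //; apply/(hB _ _ ha hy); exact: subgroup_trans hBi hBy.
by rewrite (qcard_uniq B'_sub qA' (qcard_quot_bij_image qA)).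
Qed.

End QuotientBijection.

Lemma qcard_sumset (X : zmodType) (L B : X -> Prop) n :
  is_subgroup L -> is_subgroup B ->
  qcard L (fun x => L x /\ B x) n -> qcard (sumset L B) B n.
Proof.
move=> L_sub B_sub; apply: (qcard_quot_bij (h := id) (subgroupI L_sub B_sub) B_sub _ n).1.
split=> [a ha|x y hx hy|_ [l [w [hl hw ->]]]].
- by exists a, 0; split; rewrite ?addr0; case: B_sub.
- by split=> [[]//|hB]; split=> //; exact: L_sub.2.
- by exists l => //; rewrite addrC addKr.
Qed.

Lemma sum_In_closed (V : zmodType) (Q : V -> Prop) (T : Type) (s : seq T) (F : T -> V) :
  Q 0 -> (forall x y, Q x -> Q y -> Q (x + y)) -> (forall t, List.In t s -> Q (F t)) ->
  Q (\sum_(t <- s) F t).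
Proof.
move=> Q0 QD; elim: s => [|t s IH] Qs; first by rewrite big_nil.
by rewrite big_cons; apply: QD; [apply: Qs; left | apply: IH => u hu; apply: Qs; right].
Qed.

Section IdealsAndSubmodules.
Variable R : comUnitRingType.

Lemma ideal_subgroup (I : R -> Prop) : is_ideal I -> is_subgroup I.
Proof. by case=> I0 ID IM; split=> // x y hx hy; rewrite -mulN1r; exact/ID/IM. Qed.

Lemma bideal_ideal (u1 u2 : R) Lam : is_ideal (bideal u1 u2 Lam).
Proof.
split.
- by exists [::]; rewrite big_nil.
- move=> x y [s [hs ->]] [t [ht ->]]; exists (s ++ t); rewrite big_cat; split=> // v.
  by move=> /(List.in_app_or s t v) [/hs | /ht].
- move=> r x [s [hs ->]]; exists [seq (r * v.1, v.2) | v <- s]; split.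
  + by move=> v /List.in_map_iff [w [<- /hs]].
  + by rewrite big_map mulr_sumr; apply: eq_bigr => v _; rewrite mulrA.
Qed.

Variable M : lmodType R.
Implicit Types (I : R -> Prop) (N : M -> Prop).

Lemma submod_subgroup N : is_submod N -> is_subgroup N.
Proof. by case=> N0 ND NZ; split=> // x y hx hy; rewrite -scaleN1r; exact/ND/NZ. Qed.

Lemma submodI N N' : is_submod N -> is_submod N' -> is_submod (fun x => N x /\ N' x).
Proof.
move=> [N0 ND NZ] [N'0 N'D N'Z]; split=> // [x y [hx hx'] [hy hy']|r x [hx hx']].
- by split; [exact: ND | exact: N'D].
- by split; [exact: NZ | exact: N'Z].
Qed.

Lemma idmod_submod I N : is_ideal I -> is_submod (idmod I N).
Proof.
case=> _ _ IM; split.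
- by exists [::]; rewrite big_nil.
- move=> x y [s [hs ->]] [t [ht ->]]; exists (s ++ t); rewrite big_cat; split=> // v.
  by move=> /(List.in_app_or s t v) [/hs | /ht].
- move=> r x [s [hs ->]]; exists [seq (r * v.1, v.2) | v <- s]; split.
  + by move=> v /List.in_map_iff [w [<- /hs [hI hN]]]; split=> //; exact: IM.
  + by rewrite big_map scaler_sumr; apply: eq_bigr => v _; rewrite scalerA.
Qed.

Lemma idmod_scale I N r m : I r -> N m -> idmod I N (r *: m).
Proof. by move=> hr hm; exists [:: (r, m)]; split; [move=> t [<-|[]] | rewrite big_seq1]. Qed.

Lemma idmod_sub I N x : is_submod N -> idmod I N x -> N x.
Proof. by case=> N0 ND NZ [s [hs ->]]; apply: sum_In_closed => // t /hs [_ /NZ]. Qed.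

Lemma idmod_mono I N N' x : (forall y, N y -> N' y) -> idmod I N x -> idmod I N' x.
Proof. by move=> NN' [s [hs ->]]; exists s; split=> // t /hs [hI /NN']. Qed.

End IdealsAndSubmodules.

Section FinitelyGeneratedQuotient.
Variables (R : comUnitRingType) (M : lmodType R) (K N : M -> Prop) (J : R -> Prop) (n : nat).
Hypotheses (K_sub : is_submod K) (N_sub : is_submod N).
Hypothesis J_fin : qcard (fun _ => True) J n.
Hypothesis JK_N : forall r k, J r -> K k -> N (r *: k).

Lemma combinations_cover (gens : seq M) : (forall g, List.In g gens -> K g) ->
  exists T : seq M, (forall x, x \in T -> K x) /\ forall c : seq R,
    exists2 x, x \in T & N (\sum_(i < size gens) c`_i *: gens`_i - x).
Proof.
case: (K_sub) (N_sub) J_fin => K0 KD KZ [N0 ND _] [q [qs _ _ qC]].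
elim: gens => [|g gens IH] gK.
  exists [:: 0]; split=> [x|c]; first by rewrite mem_seq1 => /eqP->.
  by exists 0; rewrite ?mem_head // big_ord0 subr0.
have [T [TK TC]] := IH (fun g' h => gK g' (or_intror h)).
have Kg : K g by apply: gK; left.
exists [seq e *: g + x | e <- q, x <- T]; split.
  by move=> _ /allpairsP [[e x] [_ /TK hx ->]]; exact/KD/hx/KZ.
move=> c; have [x xT hx] := TC (behead c); have [i hi hJ] := qC c`_0 I.
exists (q`_i *: g + x); first by apply/allpairsP; exists (q`_i, x); rewrite mem_nth ?qs.
rewrite big_ord_recl /=.
under eq_bigr => j _ do rewrite /bump leq0n add1n -nth_behead.
by rewrite opprD addrACA -scalerBl; exact/ND/hx/JK_N.
Qed.

Lemma fg_quot_finite : fg_submod K -> exists m, qcard K N m.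
Proof.
move=> [gens [gK gS]]; have [T [TK TC]] := combinations_cover gK.
apply: (qcard_of_cover (submod_subgroup N_sub) TK) => k /gS [c ->].
exact: TC.
Qed.

End FinitelyGeneratedQuotient.

Section QuotientIsoToRmodP.
Variables (R : comUnitRingType) (M : lmodType R) (L : M -> Prop) (P b : R -> Prop).
Variables (f : M -> R) (m0 : M).
Hypotheses (L_sub : is_submod L) (P_ideal : is_ideal P) (b_ideal : is_ideal b).
Hypotheses (f_add : forall x y, P (f (x + y) - (f x + f y)))
  (f_scale : forall r x, P (f (r *: x) - r * f x))
  (f_surj : forall r, exists x, P (f x - r))
  (f_ker : forall x, P (f x) <-> L x)
  (f_m0 : P (f m0 - 1)).

Local Notation bM := (idmod b (fun _ : M => True)).
Local Notation bL := (idmod b L).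

Let P_eq x y : P x -> x = y -> P y. Proof. by move=> ? <-. Qed.
Let PD x y : P x -> P y -> P (x + y). Proof. by case: P_ideal => _ PD _; exact: PD. Qed.
Let PM r x : P x -> P (r * x). Proof. by case: P_ideal => _ _; exact. Qed.
Let PB x y : P x -> P y -> P (x - y). Proof. exact: (ideal_subgroup P_ideal).2. Qed.

Lemma f_sub x y : P (f (x - y) - (f x - f y)).
Proof.
have := PD (f_add x (- y)) (f_scale (-1) y); rewrite scaleN1r mulN1r.
by move/P_eq; apply; ring.
Qed.

Lemma f_sum (s : seq (R * M)) : P (f (\sum_(t <- s) t.1 *: t.2) - \sum_(t <- s) t.1 * f t.2).
Proof.
elim: s => [|t s IH]; first by have := f_scale 0 0; rewrite scale0r !big_nil !mul0r subr0.
rewrite !big_cons; have := f_add (t.1 *: t.2) (\sum_(u <- s) u.1 *: u.2).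
by move/PD/(_ (f_scale t.1 t.2))/PD/(_ IH)/P_eq; apply; ring.
Qed.

Lemma L_scale_m0 r : L (r *: m0) <-> P r.
Proof.
rewrite -f_ker; split=> hr.
- by apply: (P_eq (PB (PB hr (f_scale r m0)) (PM r f_m0))); ring.
- by apply: (P_eq (PD (f_scale r m0) (PM (f m0) hr))); ring.
Qed.

Lemma L_sub_f_scale_m0 m : L (m - f m *: m0).
Proof.
apply/f_ker; apply: (P_eq (PB (PB (f_sub m (f m *: m0)) (f_scale (f m) m0)) (PM (f m) f_m0))).
ring.
Qed.

Lemma quot_sumset_bij :
  induces_quot_bij f (fun _ => True) (sumset L bM) (fun _ => True) (idsum b P).
Proof.
case: (b_ideal) => b0 bD bM_mul; split=> // [x y _ _|r _]; last first.
  have [x hx] := f_surj r; exists x => //; exists 0, (r - f x); split; rewrite ?add0r //.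
  by rewrite -opprB; exact: (subgroupN (ideal_subgroup P_ideal)).
split=> [[l [w [hl [s [hs ew]] exy]]]|[be [pi [hbe hpi exy]]]].
- exists (\sum_(t <- s) t.1 * f t.2), (f x - f y - \sum_(t <- s) t.1 * f t.2).
  split; last by rewrite [RHS]addrC subrK.
  + apply: sum_In_closed => // t /hs [hb _]; rewrite mulrC; exact: bM_mul.
  + have := f_sub x y; rewrite exy ew => h.
    have := PD (f_add l (\sum_(t <- s) t.1 *: t.2)) (proj2 (f_ker l) hl).
    by move/PB/(_ h)/PD/(_ (f_sum s))/P_eq; apply; ring.
- exists (x - y - be *: m0), (be *: m0); split; [|exact: idmod_scale | by rewrite subrK].
  apply/f_ker; have ex : f x = be + pi + f y by rewrite -exy subrK.
  have := f_sub x y; rewrite ex => h.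
  apply: (P_eq (PD (PB (PB (f_sub (x - y) (be *: m0)) (f_scale be m0)) (PM be f_m0)) (PD h hpi))).
  ring.
Qed.

Lemma L_cap_bM_scale_m0 k : L k /\ bM k -> exists2 r, b r /\ P r & bL (k - r *: m0).
Proof.
case: (b_ideal) (idmod_submod L b_ideal) => b0 bD b_mul [bL0 bLD _] [hk [s [hs ek]]].
have hbL : bL (k - (\sum_(t <- s) t.1 * f t.2) *: m0).
  rewrite ek scaler_suml -sumrB; apply: sum_In_closed => // t /hs [hb _].
  by rewrite -scalerA -scalerBr; apply: idmod_scale hb (L_sub_f_scale_m0 _).
exists (\sum_(t <- s) t.1 * f t.2) => //; split.
  by apply: sum_In_closed => // t /hs [hb _]; rewrite mulrC; exact: b_mul.
apply/L_scale_m0; rewrite -(subKr k (_ *: m0)).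
exact: (submod_subgroup L_sub).2 hk (idmod_sub L_sub hbL).
Qed.

Lemma idsum_scale_L_cap_bM r k : idsum b P r -> L k /\ bM k -> bL (r *: k).
Proof.
case: (idmod_submod L b_ideal) => _ bLD bLZ [be [pi [hbe hpi ->]]] hK.
have [hk _] := hK; have [r' [hr'b _] hbL] := L_cap_bM_scale_m0 hK.
rewrite scalerDl; apply: (bLD); first exact: idmod_scale.
rewrite -(subrK (r' *: m0) k) scalerDr; apply: (bLD); first exact: bLZ.
by rewrite scalerA mulrC -scalerA; apply: idmod_scale hr'b _; exact/L_scale_m0.
Qed.

Definition a_ideal r := [/\ b r, P r & bL (r *: m0)].

Lemma a_ideal_ideal : is_ideal a_ideal.
Proof.
case: (b_ideal) P_ideal (idmod_submod L b_ideal) => b0 bD bZ [P0 _ _] [bL0 bLD bLZ].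
split=> [|x y [hxb hxP hxL] [hyb hyP hyL]|r x [hxb hxP hxL]].
- by split; rewrite ?scale0r.
- by split; [exact: bD | exact: PD | rewrite scalerDl; exact: bLD].
- by split; [exact: bZ | exact: PM | rewrite -scalerA; exact: bLZ].
Qed.

Lemma idprod_sub_a_ideal x : idprod b P x -> a_ideal x.
Proof.
case: (b_ideal) P_ideal (idmod_submod L b_ideal) => b0 bD bZ [P0 _ _] [bL0 bLD _].
move=> [s [hs ->]]; split.
- by apply: sum_In_closed => // t /hs [hb _]; rewrite mulrC; exact: bZ.
- by apply: sum_In_closed => // t /hs [_ /PM].
- rewrite scaler_suml; apply: sum_In_closed => // t /hs [hb hP].
  by rewrite -scalerA; apply: idmod_scale hb _; exact/L_scale_m0.
Qed.

Lemma quot_a_ideal_bij : induces_quot_bij (fun r => r *: m0)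
  (fun r => b r /\ P r) a_ideal (fun k => L k /\ bM k) bL.
Proof.
split=> [r [hb hP]|x y [hxb hxP] [hyb hyP]|k hK].
- by split; [exact/L_scale_m0 | exact: idmod_scale].
- rewrite -scalerBl; split=> [[] //|hL]; split=> //.
  + exact: (ideal_subgroup b_ideal).2.
  + exact: PB.
- by have [r hr hbL] := L_cap_bM_scale_m0 hK; exists r.
Qed.

Lemma qcard_quot_iso_count nM : noetherian_sub L -> qcard (fun _ => True) bM nM ->
  exists nQ nL nA : nat,
    [/\ qcard (fun _ => True) (idsum b P) nQ, qcard L bL nL,
        qcard (fun r => b r /\ P r) a_ideal nA & nM * nA = nQ * nL]%N.
Proof.
move=> L_noeth hfin.
have bM_grp : is_subgroup bM := submod_subgroup (idmod_submod _ b_ideal).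
have L_grp := submod_subgroup L_sub.
have LbM_grp := sumset_subgroup L_grp bM_grp.
have bM_LbM x : bM x -> sumset L bM x by exists 0, x; split; rewrite ?add0r; case: L_grp.
have [n1 qLbM] := qcard_coarsen LbM_grp bM_LbM hfin.
have qQ : qcard (fun _ => True) (idsum b P) n1 := (qcard_quot_bij LbM_grp
  (sumset_subgroup (ideal_subgroup b_ideal) (ideal_subgroup P_ideal)) quot_sumset_bij n1).1 qLbM.
have [n2 qLK] := qcard_restrict bM_grp L_grp (fun _ _ => I) hfin.
have T_grp : is_subgroup (fun _ : M => True) by [].
have qM := qcard_tower T_grp LbM_grp (fun _ _ => I) bM_LbM qLbM (qcard_sumset L_grp bM_grp qLK).
have K_sub := submodI L_sub (idmod_submod (fun _ => True) b_ideal).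
have [nA qKbL] := fg_quot_finite K_sub (idmod_submod L b_ideal) qQ
  idsum_scale_L_cap_bM (L_noeth _ K_sub (fun _ => @proj1 _ _)).
have qA := (qcard_quot_bij (ideal_subgroup a_ideal_ideal)
  (submod_subgroup (idmod_submod L b_ideal)) quot_a_ideal_bij nA).2 qKbL.
have qL := qcard_tower L_grp (submod_subgroup K_sub) (fun _ => @proj1 _ _)
  (fun x h => conj (idmod_sub L_sub h) (idmod_mono (fun _ _ => I) h)) qLK qKbL.
exists n1, (n2 * nA)%N, nA; split=> //.
by rewrite (qcard_uniq bM_grp hfin qM) mulnA.
Qed.

End QuotientIsoToRmodP.

Theorem lemma5p2 (R : comUnitRingType) (u1 u2 : R) (hR : is_laurent2 u1 u2)
  (M : lmodType R) (L : M -> Prop) (P : R -> Prop) (Lam : int * int -> Prop)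
  (hM : noetherian_sub (fun _ : M => True))
  (hL : is_submod L) (hLn : noetherian_sub L)
  (hP : is_prime_ideal P) (hiso : quot_iso_Rmod L P)
  (hLam : is_fi_subgroup Lam)
  (nM : nat) (hfin : qcard (fun _ : M => True) (idmod (bideal u1 u2 Lam) (fun _ => True)) nM) :
  exists A : R -> Prop,
    [/\ is_ideal A,
        (forall x, idprod (bideal u1 u2 Lam) P x -> A x),
        (forall x, A x -> bideal u1 u2 Lam x /\ P x)
      & exists nQ nL nA : nat,
          [/\ qcard (fun _ : R => True) (idsum (bideal u1 u2 Lam) P) nQ,
              qcard L (idmod (bideal u1 u2 Lam) L) nL,
              qcard (fun x => bideal u1 u2 Lam x /\ P x) A nA
            & nM * nA = nQ * nL]%N].
Proof.
have [f [f_add f_scale f_surj f_ker]] := hiso.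
have [m0 f_m0] := f_surj 1.
have [P_ideal _ _] := hP.
have b_ideal := bideal_ideal u1 u2 Lam.
exists (a_ideal L P (bideal u1 u2 Lam) m0); split.
- exact: a_ideal_ideal.
- exact: idprod_sub_a_ideal P_ideal b_ideal f_scale f_ker f_m0.
- by move=> x [].
- exact (qcard_quot_iso_count hL P_ideal b_ideal f_add f_scale f_surj f_ker f_m0 hLn hfin).
Qed.
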